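(* Let $n\ge1$ players all have the same valuation $v$ on a finite set of goods $M$. Assume $v$ has nonzero marginal utility: $v(S\cup\{g\})>v(S)$ for every $S\subsetneq M$ and $g\notin S$. Then every leximin solution is both EFX and Pareto optimal.
   Context: A valuation is a function $v:2^M\to\mathbb{R}_{\ge0}$ with $v(\emptyset)=0$ that is monotone: $v(S)\le v(T)$ whenever $S\subseteq T$. An allocation is an ordered partition $(A_1,\dots,A_n)$ of $M$; parts may be empty. It is EFX if for all players $i,j$ and every $g\in A_j$ we have $v_i(A_i)\ge v_i(A_j\setminus\{g\})$. It is Pareto optimal (PO) if there is no allocation $B$ with $v_i(B_i)\ge v_i(A_i)$ for all $i$ and $v_j(B_j)>v_j(A_j)$ for some $j$. For an allocation $A$, let $X^A$ be the ordering of the players by increasing utility $v_i(A_i)$, with ties broken by increasing player index. The leximin comparison is defined as follows. For allocations $A$ and $B$, let $\ell$ be the first index at which $v_{X^A_\ell}(A_{X^A_\ell})\ne v_{X^B_\ell}(B_{X^B_\ell})$. Then $A\prec B$ holds if and only if such an $\ell$ exists and $v_{X^A_\ell}(A_{X^A_\ell})< v_{X^B_\ell}(B_{X^B_\ell})$. Equivalently, the sorted utility vector of $A$ is lexicographically smaller than that of $B$. A leximin solution is an allocation $A$ with no allocation $B$ satisfying $A\prec B$. *)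

From HB Require Import structures.
From mathcomp Require Import all_boot all_order all_algebra.
Set Implicit Arguments. Unset Strict Implicit. Unset Printing Implicit Defensive.
Import Order.TTheory GRing.Theory Num.Theory.
Local Open Scope ring_scope.

Definition is_valuation (R : realFieldType) (M : finType) (v : {set M} -> R) : Prop :=
  v set0 = 0 /\ (forall S, 0 <= v S) /\ (forall S T : {set M}, S \subset T -> v S <= v T).

Definition is_allocation (M : finType) (n : nat) (A : {ffun 'I_n -> {set M}}) : Prop :=
  (forall i j : 'I_n, i != j -> [disjoint A i & A j]) /\
  (forall g : M, exists i : 'I_n, g \in A i).

Definition utilities (R : realFieldType) (M : finType) (n : nat)
  (vs : 'I_n -> {set M} -> R) (A : {ffun 'I_n -> {set M}}) : seq R :=
  [seq vs i (A i) | i <- enum 'I_n].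

Definition sorted_utilities (R : realFieldType) (M : finType) (n : nat)
  (vs : 'I_n -> {set M} -> R) (A : {ffun 'I_n -> {set M}}) : seq R :=
  sort (fun x y : R => x <= y) (utilities vs A).

Fixpoint lex_lt (R : realFieldType) (s t : seq R) : Prop :=
  match s, t with
  | x :: s', y :: t' => x < y \/ (x = y /\ lex_lt s' t')
  | _, _ => False
  end.

Definition leximin_lt (R : realFieldType) (M : finType) (n : nat)
  (vs : 'I_n -> {set M} -> R) (A B : {ffun 'I_n -> {set M}}) : Prop :=
  lex_lt (sorted_utilities vs A) (sorted_utilities vs B).

Definition is_leximin (R : realFieldType) (M : finType) (n : nat)
  (vs : 'I_n -> {set M} -> R) (A : {ffun 'I_n -> {set M}}) : Prop :=
  is_allocation A /\
  ~ (exists B, is_allocation B /\ leximin_lt vs A B).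

Definition is_EFX (R : realFieldType) (M : finType) (n : nat)
  (vs : 'I_n -> {set M} -> R) (A : {ffun 'I_n -> {set M}}) : Prop :=
  forall (i j : 'I_n) (g : M), g \in A j -> vs i (A j :\ g) <= vs i (A i).

Definition is_PO (R : realFieldType) (M : finType) (n : nat)
  (vs : 'I_n -> {set M} -> R) (A : {ffun 'I_n -> {set M}}) : Prop :=
  ~ (exists B, is_allocation B /\
       (forall i, vs i (A i) <= vs i (B i)) /\ (exists j, vs j (A j) < vs j (B j))).

From HB Require Import structures.
From mathcomp Require Import all_boot all_order all_algebra.
Set Implicit Arguments. Unset Strict Implicit. Unset Printing Implicit Defensive.
Import Order.TTheory GRing.Theory Num.Theory.
Local Open Scope ring_scope.

(* Both properties follow from one observation about the leximin order: if
   every player either keeps her utility or ends up strictly above a level x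
   without starting below it, and some player at level x strictly gains, then
   the sorted utility vector increases lexicographically (the entries below x
   are untouched and fewer entries equal x).  A Pareto improvement does this
   for x the smallest utility of a player who strictly gains.  An EFX
   violation [v (A i) < v (A j :\ g)] does it for x = v (A i), by handing g
   from player j to player i: with identical valuations and positive
   marginals, i gains, and j keeps more than v (A i). *)

Section LexOrder.

Variable R : realFieldType.

Local Notation le := (fun x y : R => x <= y).

Lemma filter_lt_nil (s : seq R) (x : R) :
  all (fun t => x <= t) s -> [seq t <- s | t < x] = [::].
Proof. by elim: s => //= t s IH /andP[xt xs]; rewrite ltNge xt IH. Qed.

Lemma lex_lt_sorted (x : R) (a b : seq R) :
  sorted le a -> sorted le b -> size a = size b ->
  [seq t <- a | t < x] = [seq t <- b | t < x] ->
  (count (pred1 x) b < count (pred1 x) a)%N ->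
  lex_lt a b.
Proof.
elim: a b => [|y a IH] [|z b] //= sa sb [size_ab] filt cnt.
have ge_y := order_path_min (@le_trans _ R) sa.
have ge_z := order_path_min (@le_trans _ R) sb.
have {}sa := path_sorted sa; have {}sb := path_sorted sb.
have above t s : x <= t -> all (fun u => t <= u) s -> all (fun u => x <= u) s.
  by move=> xt; apply: sub_all => u; apply: le_trans.
move: filt; have [yx|xy] := ltP y x; have [zx|xz] := ltP z x.
- move=> [<- filt]; right; split=> //; apply: IH => //.
  by move: cnt; rewrite (lt_eqF yx) (lt_eqF zx).
- by rewrite (filter_lt_nil (above _ _ xz ge_z)).
- by rewrite (filter_lt_nil (above _ _ xy ge_y)).
move=> filt.
have y_eq : y = x.
  have /hasP[t] : has (pred1 x) (y :: a).
    by rewrite has_count; apply: leq_ltn_trans cnt.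
  rewrite inE => /orP[/eqP-> /eqP-> //|ta /eqP tx].
  by apply/eqP; rewrite eq_le xy andbT -tx (allP ge_y).
have [zx|xz'|zx] := ltgtP z x; first by rewrite leNgt zx in xz.
  by left; rewrite y_eq.
right; split; first by rewrite y_eq zx.
by apply: IH => //; rewrite y_eq zx eqxx ltn_add2l in cnt.
Qed.

Lemma sub_count_lt (T : eqType) (a b : pred T) (s : seq T) (t : T) :
  subpred b a -> t \in s -> a t -> ~~ b t -> (count b s < count a s)%N.
Proof.
move=> sub_ba + a_t nb_t; elim: s => //= y s IH.
rewrite inE => /orP[/eqP<-|/IH lt_s]; first by rewrite a_t (negbTE nb_t) ltnS sub_count.
by rewrite -addnS leq_add //; case: (b y) (@sub_ba y) => // ->.
Qed.

Lemma lex_lt_sort_raise (I : finType) (u w : I -> R) (x : R) (k0 : I) :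
  (forall k, u k = w k \/ (x <= u k /\ x < w k)) ->
  u k0 = x -> x < w k0 ->
  lex_lt (sort le [seq u i | i <- enum I]) (sort le [seq w i | i <- enum I]).
Proof.
move=> raise uk0 wk0.
have le_total : total le by move=> a b; exact: le_total.
have le_tr : transitive le by move=> a b c; exact: le_trans.
apply: (@lex_lt_sorted x); rewrite ?sort_sorted ?size_sort ?size_map //.
  rewrite !filter_sort //; congr sort.
  elim: (enum I) => //= k e ->.
  by case: (raise k) => [->|[xu xw]] //; rewrite ltNge xu ltNge (ltW xw).
rewrite !(permP (permEl (perm_sort le _))) !count_map.
apply: (sub_count_lt (t := k0)).
- by move=> k /=; case: (raise k) => [->|[_ /gt_eqF->]].
- by rewrite -enumT mem_enum.
- by rewrite /= uk0.
- by rewrite /= (gt_eqF wk0).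
Qed.

End LexOrder.

Section Allocations.

Variables (R : realFieldType) (M : finType) (n : nat).
Implicit Types A B : {ffun 'I_n -> {set M}}.

Lemma leximin_lt_raise (vs : 'I_n -> {set M} -> R) A B (x : R) (k0 : 'I_n) :
  (forall k, vs k (A k) = vs k (B k) \/ (x <= vs k (A k) /\ x < vs k (B k))) ->
  vs k0 (A k0) = x -> x < vs k0 (B k0) ->
  leximin_lt vs A B.
Proof. exact: lex_lt_sort_raise. Qed.

Lemma leximin_PO (vs : 'I_n -> {set M} -> R) A : is_leximin vs A -> is_PO vs A.
Proof.
move=> [_ no_better] [B [allocB [le_AB [j lt_j]]]].
have [k0 lt_k0 min_k0] :=
  arg_minP (fun k => vs k (A k)) (lt_j : (fun k => vs k (A k) < vs k (B k)) j).
apply: no_better; exists B; split=> //.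
apply: (leximin_lt_raise _ erefl lt_k0) => k.
have [lt_k|] := boolP (vs k (A k) < vs k (B k)).
  by right; split; [exact: min_k0 | exact: le_lt_trans (min_k0 k lt_k) lt_k].
by rewrite lt_neqAle le_AB andbT negbK => /eqP; left.
Qed.

(* Deleting g from every other bundle, not just from its owner's, makes
   [in_give_good] hold for arbitrary A. *)
Definition give_good A (i : 'I_n) (g : M) : {ffun 'I_n -> {set M}} :=
  [ffun k => if k == i then g |: A k else A k :\ g].

Lemma in_give_good A i g k h :
  (h \in give_good A i g k) = (if h == g then k == i else h \in A k).
Proof.
rewrite ffunE; case: (eqVneq k i) => _; rewrite ?in_setU1 ?in_setD1;
  by case: (eqVneq h g).
Qed.

Lemma give_good_allocation A i g : is_allocation A -> is_allocation (give_good A i g).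
Proof.
move=> [disjA coverA]; split=> [k l kl|h].
  apply/pred0P => h /=; rewrite !in_give_good.
  case: (eqVneq h g) => _; apply/negbTE/andP.
    by move=> [/eqP ki /eqP li]; rewrite ki li eqxx in kl.
  by move=> [hk hl]; rewrite (disjointFr (disjA _ _ kl) hk) in hl.
case: (eqVneq h g) => [->|hg]; first by exists i; rewrite in_give_good !eqxx.
by have [k hk] := coverA h; exists k; rewrite in_give_good (negbTE hg).
Qed.

Lemma leximin_EFX (v : {set M} -> R) A :
  (forall S T : {set M}, S \subset T -> v S <= v T) ->
  (forall (S : {set M}) (g : M), S \proper [set: M] -> g \notin S -> v S < v (g |: S)) ->
  is_leximin (fun _ => v) A -> is_EFX (fun _ => v) A.
Proof.
move=> vmono vmarg [allocA no_better] i j g gAj /=.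
have [disjA _] := allocA.
rewrite leNgt; apply/negP => envy.
have [eq_ij|ij] := eqVneq i j.
  by rewrite eq_ij ltNge vmono ?subD1set in envy.
have gAi : g \notin A i.
  by apply/negP => gi; rewrite (disjointFr (disjA _ _ ij) gi) in gAj.
have gain : v (A i) < v (give_good A i g i).
  rewrite ffunE eqxx; apply: vmarg => //.
  by rewrite properT; apply: contraNneq gAi => ->; apply: in_setT.
apply: no_better; exists (give_good A i g); split; first exact: give_good_allocation.
apply: (leximin_lt_raise _ erefl gain) => k.
have [->|ki] := eqVneq k i; first by right.
rewrite ffunE (negbTE ki); have [->|kj] := eqVneq k j.
  by right; split=> //; apply: ltW (lt_le_trans envy (vmono _ _ (subD1set _ _))).
left; congr v; apply/esym/setDidPl; rewrite disjoint_sym disjoints1.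
by apply/negP => gk; rewrite (disjointFr (disjA _ _ kj) gk) in gAj.
Qed.

End Allocations.

Theorem theorem5p4 (R : realFieldType) (M : finType) (n : nat) (v : {set M} -> R) :
  (0 < n)%N ->
  is_valuation v ->
  (forall (S : {set M}) (g : M), S \proper [set: M] -> g \notin S -> v S < v (g |: S)) ->
  forall A : {ffun 'I_n -> {set M}},
    is_leximin (fun _ => v) A -> is_EFX (fun _ => v) A /\ is_PO (fun _ => v) A.
Proof.
move=> _ [_ [_ vmono]] vmarg A leximinA.
by split; [exact: leximin_EFX | exact: leximin_PO].
Qed.
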